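(* Let $G$ be a vertex-weighted multigraph and $H$ a submultigraph of $G$. Assume: (a) $G$ is completely multipartite; (b) $\mathrm{wt}_G(v)\geq 2$ for every vertex $v$ of $G$; (c) whenever $\{v_1,\dots,v_s\}\subset V_H$ is a set of mutually non-adjacent vertices of $H$, we have $s\leq\#V_H-4$. Then there exists a vertex-weighted multigraph $G'$, obtained from $G$ by a finite (possibly empty) sequence of admissible contractions, such that $H$ is a spanning submultigraph of $G'$.
   Context: A vertex-weighted multigraph is $G=(V,E,r,\mathrm{wt})$ with $V$ a finite vertex set, $E$ a finite edge set, $r$ assigning to each edge an unordered pair of distinct vertices, $\mathrm{wt}:V\to\mathbb{Z}$. $\deg(v)$ is the number of edges incident to $v$. $G_1$ is a submultigraph of $G_2$ if there are injective $\phi:V_1\to V_2$, $\psi:E_1\to E_2$ with $r_2\circ\psi=\phi\circ r_1$ and $\mathrm{wt}_1\leq\mathrm{wt}_2\circ\phi$; spanning if $\phi$ is bijective. $G$ is completely multipartite if there is no triple of vertices $v_1,v_2,v_3$ with $\{v_1,v_2\}$ and $\{v_1,v_3\}$ non-adjacent but $\{v_2,v_3\}$ adjacent. For adjacent $v,w$, the contraction with respect to $\{v,w\}$ identifies $v,w$ to a vertex of weight $\mathrm{wt}(v)+\mathrm{wt}(w)$, deletes edges between $v$ and $w$, and keeps all other edges and weights. With $m$ the number of edges between $v,w$, the contraction is admissible if, for some labeling of the pair as $v,w$, there is an integer $0\leq l<m$ with: every vertex $x\notin\{v,w\}$ has $\deg(x)\geq 3$; $\mathrm{wt}(v)\geq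 l+1$, $\mathrm{wt}(w)\geq l+2$; $\deg(v)-m+l\geq 3$ and $\deg(w)-m+l\geq 3$. *)

From mathcomp Require Import all_boot all_order all_algebra.
Set Implicit Arguments. Unset Strict Implicit. Unset Printing Implicit Defensive.
Import GRing.Theory Num.Theory.
Local Open Scope ring_scope.

(* A vertex-weighted multigraph: finite vertex type, finite edge type,
   each edge e has an endpoint set [ends e] (an unordered pair of distinct
   vertices -- enforced by the well-formedness predicate [is_mgraph]),
   and an integer weight on vertices. *)
Record mgraph := MGraph {
  vtx : finType;
  edg : finType;
  ends : edg -> {set vtx};
  wt : vtx -> int }.

Definition is_mgraph (G : mgraph) : Prop :=
  forall e : edg G, #|ends e| = 2%N.

Definition adjacent (G : mgraph) (x y : vtx G) : Prop :=
  exists e : edg G, ends e = [set x; y].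

Definition deg (G : mgraph) (x : vtx G) : nat :=
  #|[set e : edg G | x \in ends e]|.

Definition mult (G : mgraph) (x y : vtx G) : nat :=
  #|[set e : edg G | ends e == [set x; y]]|.

Definition submgraph (G1 G2 : mgraph) : Prop :=
  exists (phi : vtx G1 -> vtx G2) (psi : edg G1 -> edg G2),
    [/\ injective phi, injective psi,
        (forall e, ends (psi e) = phi @: ends e) &
        (forall v, wt v <= wt (phi v))].

Definition spanning_submgraph (G1 G2 : mgraph) : Prop :=
  exists (phi : vtx G1 -> vtx G2) (psi : edg G1 -> edg G2),
    [/\ bijective phi, injective psi,
        (forall e, ends (psi e) = phi @: ends e) &
        (forall v, wt v <= wt (phi v))].

Definition completely_multipartite (G : mgraph) : Prop :=
  ~ exists v1 v2 v3 : vtx G,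
      [/\ ~ adjacent v1 v2, ~ adjacent v1 v3 & adjacent v2 v3].

Section Contraction.
Variables (G : mgraph) (v w : vtx G).

Definition cvtx : finType := option {x : vtx G | x \notin [set v; w]}.
Definition cedg : finType := {e : edg G | ends e != [set v; w]}.

Definition cmap (x : vtx G) : cvtx :=
  match insub x with Some y => Some y | None => None end.

Definition cends (e : cedg) : {set cvtx} := cmap @: ends (val e).

Definition cwt (x : cvtx) : int :=
  match x with None => wt v + wt w | Some y => wt (val y) end.

Definition contract : mgraph := MGraph cends cwt.
End Contraction.

Definition admissible_lab (G : mgraph) (v w : vtx G) : Prop :=
  let m := mult v w in
  exists l : nat, (l < m)%N /\
    [/\ (forall x : vtx G, x != v -> x != w -> (3 <= deg x)%N),
        wt v >= l%:Z + 1, wt w >= l%:Z + 2,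
        (deg v)%:Z - m%:Z + l%:Z >= 3 &
        (deg w)%:Z - m%:Z + l%:Z >= 3].

Definition admissible (G : mgraph) (v w : vtx G) : Prop :=
  adjacent v w /\ (admissible_lab v w \/ admissible_lab w v).

Inductive contracts_to : mgraph -> mgraph -> Prop :=
  | ct_refl G : contracts_to G G
  | ct_step G (v w : vtx G) G' :
      admissible v w -> contracts_to (contract v w) G' -> contracts_to G G'.

Definition mutually_nonadjacent (G : mgraph) (S : {set vtx G}) : Prop :=
  forall x y, x \in S -> y \in S -> ~ adjacent x y.

From mathcomp Require Import all_boot all_order all_algebra.
From mathcomp Require Import zify.
Import Order.TTheory GRing.Theory Num.Theory.
Set Implicit Arguments. Unset Strict Implicit. Unset Printing Implicit Defensive.
Local Open Scope ring_scope.

(* Fix an embedding phi of H into G.  Since G is completely multipartite, the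
   vertices of H whose images are not adjacent to a given vertex x of G are
   mutually non-adjacent in H, so by (c) every x is adjacent to the images of
   at least four vertices of H.  Hence, if x or y lies outside the image of
   phi, x has at least three edges other than those joining it to y.  This is what
   admissibility (with l = 0) of contracting a vertex w outside the image with
   an image neighbour v asks for; weights >= 2 give the weight conditions.
   The contraction keeps the embedding, the weight bound and the invariant,
   and shrinks G; once phi is onto, H is spanning. *)

Definition adjb (G : mgraph) (x y : vtx G) : bool :=
  [exists e : edg G, ends e == [set x; y]].

Lemma adjP (G : mgraph) (x y : vtx G) : reflect (adjacent x y) (adjb x y).
Proof.
by apply: (iffP existsP) => [[e /eqP He]|[e He]]; exists e; rewrite ?He.
Qed.

Lemma adjacent_sym (G : mgraph) (x y : vtx G) : adjacent x y -> adjacent y x.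
Proof. by case=> e He; exists e; rewrite He setUC. Qed.

Lemma mult_sym (G : mgraph) (x y : vtx G) : mult x y = mult y x.
Proof. by rewrite /mult setUC. Qed.

Definition other_edges (G : mgraph) (x y : vtx G) : {set edg G} :=
  [set e | (x \in ends e) && (ends e != [set x; y])].

Lemma deg_other_edges (G : mgraph) (x y : vtx G) :
  deg x = (#|other_edges x y| + mult x y)%N.
Proof.
rewrite /deg /mult -(cardsID [set e | ends e == [set x; y]] [set e | x \in ends e]).
rewrite addnC; congr (_ + _)%N; apply: eq_card => e; rewrite !inE.
  by rewrite andbC.
by case: eqP => [->|]; rewrite ?andbF // !inE eqxx.
Qed.

Definition img_nbrs (H G : mgraph) (phi : vtx H -> vtx G) (x : vtx G) :
  {set vtx H} := [set a | adjb x (phi a)].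

Definition embedding (H G : mgraph) (phi : vtx H -> vtx G)
    (psi : edg H -> edg G) : Prop :=
  [/\ injective phi, injective psi, (forall e, ends (psi e) = phi @: ends e)
    & (forall a, wt a <= wt (phi a))].

Section ImageNeighbours.
Variables (H G : mgraph) (phi : vtx H -> vtx G).
Hypothesis phi_inj : injective phi.

Lemma card_img_nbrs_le (x y : vtx G) :
  (#|img_nbrs phi x| <= #|other_edges x y| + #|phi @^-1: [set x; y]|)%N.
Proof.
rewrite -(cardsID (phi @^-1: [set x; y])) addnC.
apply: leq_add; last exact/subset_leq_card/subsetIr.
set A := img_nbrs phi x :\: _.
have set1_phi_inj : injective (fun a => [set phi a]).
  by move=> a b /set1_inj /phi_inj.
rewrite -(card_imset A set1_phi_inj).
apply: leq_trans (leq_imset_card (fun e => ends e :\ x) (other_edges x y)).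
apply: subset_leq_card; apply/subsetP => _ /imsetP [a + ->].
rewrite !inE negb_or => /andP [/andP [ax ay] /adjP [e He]].
apply/imsetP; exists e; last by rewrite He setU1K // inE eq_sym.
rewrite inE He !inE eqxx /=; apply: contraNneq ax => E.
have : phi a \in [set x; y] by rewrite -E !inE eqxx orbT.
by rewrite !inE (negbTE ay) orbF.
Qed.

Lemma card_preimset2_le1 (x y : vtx G) :
  y \notin codom phi -> (#|phi @^-1: [set x; y]| <= 1)%N.
Proof.
move=> y_out; rewrite -(card_imset _ phi_inj) -(cards1 x).
apply: subset_leq_card; apply/subsetP => _ /imsetP [a + ->].
rewrite !inE => /orP [] /eqP phia; first by rewrite phia.
by move: y_out; rewrite -phia codom_f.
Qed.

Hypothesis nbrs_ge4 : forall x, (4 <= #|img_nbrs phi x|)%N.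

Lemma card_other_edges_ge3 (x y : vtx G) :
  (x \notin codom phi) || (y \notin codom phi) -> (3 <= #|other_edges x y|)%N.
Proof.
move=> out; have := card_img_nbrs_le x y; have := nbrs_ge4 x.
have : (#|phi @^-1: [set x; y]| <= 1)%N.
  case/orP: out => out; last exact: card_preimset2_le1.
  by rewrite setUC; apply: card_preimset2_le1.
lia.
Qed.

Hypothesis wt_ge2 : forall x : vtx G, 2 <= wt x.

Lemma admissible_into_image (a : vtx H) (w : vtx G) :
  w \notin codom phi -> adjacent w (phi a) -> admissible (phi a) w.
Proof.
move=> w_out adj_w; split; first exact: adjacent_sym.
left; exists 0%N; split.
  case: (adjacent_sym adj_w) => e He.
  by apply/card_gt0P; exists e; rewrite inE He.
split.
- move=> x _ _; rewrite (deg_other_edges x w).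
  by have := @card_other_edges_ge3 x w; rewrite w_out orbT; lia.
- by have := wt_ge2 (phi a); lia.
- by have := wt_ge2 w; lia.
- rewrite (deg_other_edges (phi a) w).
  by have := @card_other_edges_ge3 (phi a) w; rewrite w_out orbT; lia.
- rewrite (deg_other_edges w (phi a)) mult_sym.
  by have := @card_other_edges_ge3 w (phi a); rewrite w_out; lia.
Qed.

End ImageNeighbours.

Section Contraction.
Variables (G : mgraph) (v w : vtx G).

Lemma cmap_notin x (x_out : x \notin [set v; w]) :
  cmap v w x = Some (exist (fun x => x \notin [set v; w]) x x_out).
Proof. by rewrite /cmap (insubT (fun x => x \notin [set v; w]) x_out). Qed.

Lemma cmap_in x : x \in [set v; w] -> cmap v w x = None.
Proof. by move=> x_in; rewrite /cmap insubF // x_in. Qed.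

Lemma cmap_inj_on : {in predC1 w &, injective (cmap v w)}.
Proof.
have in_pair x : x != w -> (x \in [set v; w]) = (x == v).
  by move=> xw; rewrite !inE (negbTE xw) orbF.
move=> x y; rewrite !inE => xw yw.
case: (boolP (x \in [set v; w])) => x_in; case: (boolP (y \in [set v; w])) => y_in.
- by move: x_in y_in; rewrite !in_pair // => /eqP -> /eqP ->.
- by rewrite (cmap_in x_in) (cmap_notin y_in).
- by rewrite (cmap_notin x_in) (cmap_in y_in).
- by rewrite (cmap_notin x_in) (cmap_notin y_in) => -[].
Qed.

Lemma cmap_onto : v != w -> forall x', exists2 x, x != w & cmap v w x = x'.
Proof.
move=> vw [[x x_out]|].
  exists x; last exact: cmap_notin.
  by apply: contraNneq x_out => ->; rewrite !inE eqxx orbT.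
by exists v; rewrite // cmap_in // !inE eqxx.
Qed.

Lemma adjacent_contract x y : adjacent x y -> [set x; y] != [set v; w] ->
  @adjacent (contract v w) (cmap v w x) (cmap v w y).
Proof.
case=> e He ne_vw; have e_ne : ends e != [set v; w] by rewrite He.
exists (exist (fun e => ends e != [set v; w]) e e_ne : cedg v w).
by rewrite /= /cends /= He imsetU1 imset_set1.
Qed.

Lemma card_vtx_contract : v != w -> (#|vtx (contract v w)|).+1 = #|vtx G|.
Proof.
move=> vw; rewrite -(cardsC [set v; w]) cards2 vw add2n /= card_option card_sig.
by congr _.+2; apply: eq_card => x; rewrite !inE.
Qed.

Lemma wt_le_cwt_cmap x : x != w -> 0 <= wt w -> wt x <= cwt (cmap v w x).
Proof.
move=> xw wt_w; case: (boolP (x \in [set v; w])) => x_in.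
  move: x_in; rewrite !inE (negbTE xw) orbF => /eqP ->.
  by rewrite cmap_in /= ?lerDl // !inE eqxx.
by rewrite cmap_notin.
Qed.

Lemma cwt_ge (c : int) : 0 <= c -> (forall x : vtx G, c <= wt x) ->
  forall x : vtx (contract v w), c <= cwt x.
Proof.
move=> c_ge0 wt_ge [y|] /=; first exact: wt_ge.
by apply: le_trans (wt_ge v) _; rewrite lerDl (le_trans c_ge0).
Qed.

End Contraction.

Section EmbeddingContraction.
Variables (H G : mgraph) (phi : vtx H -> vtx G) (psi : edg H -> edg G).
Variables (v w : vtx G).
Hypothesis w_out : w \notin codom phi.

Let phi_neq_w a : phi a != w.
Proof. by apply: contraNneq w_out => <-; apply: codom_f. Qed.

Lemma embedding_contract : embedding phi psi -> 0 <= wt w ->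
  exists psi', @embedding H (contract v w) (cmap v w \o phi) psi'.
Proof.
case=> phi_inj psi_inj ends_psi wt_phi wt_w.
have psi_ne e : ends (psi e) != [set v; w].
  rewrite ends_psi; apply/negP => /eqP E.
  have : w \in phi @: ends e by rewrite E !inE eqxx orbT.
  by case/imsetP => a _ /esym/eqP; rewrite (negbTE (phi_neq_w a)).
exists (fun e => exist (fun e => ends e != [set v; w]) (psi e) (psi_ne e)).
split.
- move=> a b /cmap_inj_on phi_ab; apply/phi_inj/phi_ab; exact: phi_neq_w.
- by move=> e1 e2 /(congr1 val) /psi_inj.
- by move=> e; rewrite /= /cends /= ends_psi -imset_comp.
- by move=> a; apply: le_trans (wt_phi a) (wt_le_cwt_cmap _ (phi_neq_w a) wt_w).
Qed.

Lemma img_nbrs_contract x : x != w ->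
  img_nbrs phi x \subset @img_nbrs H (contract v w) (cmap v w \o phi) (cmap v w x).
Proof.
move=> xw; apply/subsetP => a; rewrite !inE => /adjP adj_xa.
apply/adjP/adjacent_contract => //; apply/negP => /eqP E.
have : w \in [set x; phi a] by rewrite E !inE eqxx orbT.
by rewrite !inE eq_sym (negbTE xw) eq_sym (negbTE (phi_neq_w a)).
Qed.

End EmbeddingContraction.

Lemma embedding_spanning (H G : mgraph) phi psi :
  @embedding H G phi psi -> (forall x, x \in codom phi) -> spanning_submgraph H G.
Proof.
case=> phi_inj psi_inj ends_psi wt_phi onto; exists phi, psi; split => //.
by exists (fun x => iinv (onto x)) => x; rewrite ?iinv_f ?f_iinv.
Qed.

Lemma img_nbrs_ge4 (H G : mgraph) phi psi :
  @embedding H G phi psi -> completely_multipartite G ->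
  (forall S : {set vtx H}, mutually_nonadjacent S ->
     #|S|%:Z <= #|vtx H|%:Z - 4) ->
  forall x, (4 <= #|img_nbrs phi x|)%N.
Proof.
case=> _ _ ends_psi _ G_cm indep_small x.
set S := ~: img_nbrs phi x.
have S_indep : mutually_nonadjacent S.
  move=> a b; rewrite !inE => /adjP not_xa /adjP not_xb [e He].
  apply: G_cm; exists x, (phi a), (phi b); split => //.
  by exists (psi e); rewrite ends_psi He imsetU1 imset_set1.
by have := indep_small S S_indep; have := cardsC (img_nbrs phi x); rewrite -/S; lia.
Qed.

Lemma contracts_to_spanning (H G : mgraph) phi psi :
  @embedding H G phi psi -> (forall x : vtx G, 2 <= wt x) ->
  (forall x, 4 <= #|img_nbrs phi x|)%N ->
  exists G', contracts_to G G' /\ spanning_submgraph H G'.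
Proof.
have [n] := ubnP #|vtx G|; elim: n G phi psi => // n IH G phi psi ltGn.
move=> emb wt_ge2 nbrs_ge4.
have [onto | /forallPn [w w_out]] := boolP [forall x, x \in codom phi].
  exists G; split; first exact: ct_refl.
  by apply: embedding_spanning emb _; apply/forallP.
have /card_gt0P [a] : (0 < #|img_nbrs phi w|)%N by apply: leq_trans (nbrs_ge4 w).
rewrite inE => /adjP adj_wa.
have vw : phi a != w by apply: contraNneq w_out => <-; apply: codom_f.
have wt_w : 0 <= wt w by apply: le_trans (wt_ge2 w).
have [psi' emb'] := embedding_contract (phi a) w_out emb wt_w.
have [|||G' [contr span]] := IH _ _ _ _ emb'.
- by rewrite -ltnS card_vtx_contract.
- exact: cwt_ge.
- move=> x'; have [x xw <-] := cmap_onto vw x'.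
  exact: leq_trans (nbrs_ge4 x) (subset_leq_card (img_nbrs_contract _ w_out xw)).
have phi_inj : injective phi by case: emb.
exists G'; split => //; apply: ct_step contr.
exact: (admissible_into_image phi_inj nbrs_ge4 wt_ge2 w_out adj_wa).
Qed.

Theorem lemma3p6 (G H : mgraph) :
  is_mgraph G -> is_mgraph H ->
  submgraph H G ->
  completely_multipartite G ->
  (forall v : vtx G, 2 <= wt v) ->
  (forall S : {set vtx H}, mutually_nonadjacent S ->
     (#|S|%:Z <= #|vtx H|%:Z - 4)) ->
  exists G' : mgraph, contracts_to G G' /\ spanning_submgraph H G'.
Proof.
move=> _ _ [phi [psi emb]] G_cm wt_ge2 indep_small.
exact: contracts_to_spanning emb wt_ge2 (img_nbrs_ge4 emb G_cm indep_small).
Qed.
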